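(* Let $\beta > 0$ be fixed. There is a constant $C$ such that for all $\alpha > 0$, $\tau > 0$, and every $u \in \mathrm{H}^1(\mathbb{R})$ that is continuous and affine on each interval $[k\tau,(k+1)\tau]$, $k \in \mathbb{Z}$, the upwinded interpolant $v$ of $u$ satisfies $$\alpha \int_{\mathbb{R}} | \dot v|^2 \leq C\left( |u|_{\mathrm{H}^{1/2}}^2 + \alpha \int_{\mathbb{R}} | \dot u |^2\right).$$
   Context: The upwinded interpolant of a continuous $u$ is the unique continuous function $v$ with $v(k\tau) = u(k\tau)$ for all $k \in \mathbb{Z}$ and which on each $[k\tau,(k+1)\tau]$ is of the form $c_1 + c_2\exp(-\beta t/\alpha)$ for constants $c_1,c_2$. A dot denotes the derivative. $|u|_{\mathrm{H}^{1/2}}$ is the $\mathrm{H}^{1/2}(\mathbb{R})$ seminorm (Slobodetski or, equivalently, Fourier seminorm). *)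

From HB Require Import structures.
From mathcomp Require Import all_boot all_order all_algebra.
From mathcomp Require Import all_classical all_reals all_analysis.
Set Implicit Arguments. Unset Strict Implicit. Unset Printing Implicit Defensive.
Import Order.TTheory GRing.Theory Num.Theory.
Import numFieldNormedType.Exports.
Local Open Scope ring_scope.

Definition sq_int {R : realType} (f : R -> R) : \bar R :=
  (\int[@lebesgue_measure R]_x ((f x) ^+ 2)%:E)%E.

(* Dirichlet energy \int_R |u'|^2, with the classical derivative (which exists
   outside a null set for the piecewise smooth functions considered) *)
Definition dirichlet {R : realType} (f : R -> R) : \bar R := sq_int (derive1 f).

Definition H12_seminorm2 {R : realType} (u : R -> R) : \bar R :=
  (\int[@lebesgue_measure R]_x \int[@lebesgue_measure R]_y
      (((u x - u y) ^+ 2) / ((x - y) ^+ 2))%:E)%E.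

(* u in H^1(R), for a continuous, piecewise affine u *)
Definition in_H1 {R : realType} (u : R -> R) : Prop :=
  (sq_int u < +oo)%E /\ (dirichlet u < +oo)%E.

Definition piecewise_affine {R : realType} (tau : R) (u : R -> R) : Prop :=
  forall k : int, exists c1 c2 : R, forall t : R,
    k%:~R * tau <= t <= (k + 1)%:~R * tau -> u t = c1 + c2 * t.

Definition upwinded_interpolant {R : realType} (alpha beta tau : R)
    (u v : R -> R) : Prop :=
  continuous v /\
  (forall k : int, v (k%:~R * tau) = u (k%:~R * tau)) /\
  (forall k : int, exists c1 c2 : R, forall t : R,
    k%:~R * tau <= t <= (k + 1)%:~R * tau ->
    v t = c1 + c2 * expR (- (beta * t / alpha))).

(* On a cell [a, a + tau] the function u is affine with slope s, and
   v = q1 + q2 exp (c t), c = - beta / alpha, has the same values at the ends.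
   An explicit integration gives \int_cell |v'|^2 <= (1 + beta tau / (2 alpha)) tau s^2,
   while tau s^2 = \int_cell |u'|^2, and tau s^2 <= \int |u(x) - u(y)|^2 / |x - y|^2 dy
   for x in the cell (keep only the y in the cell).  Summing over the cells,
   alpha \int |v'|^2 <= alpha \int |u'|^2 + (beta / 2) |u|_{H^1/2}^2, so C = 1 + beta / 2. *)

From HB Require Import structures.
From mathcomp Require Import all_boot all_order all_algebra.
From mathcomp Require Import all_classical all_reals all_analysis.
From mathcomp Require Import measurable_realfun.
From mathcomp Require Import ring lra.
Import Order.TTheory GRing.Theory Num.Theory.
Import numFieldNormedType.Exports.
Set Implicit Arguments. Unset Strict Implicit.
Local Open Scope ring_scope.
Local Open Scope classical_set_scope.

(* No measurability is required, since the integral of a nonnegative function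
   is a supremum over the simple functions below it; the inner integral in
   [H12_seminorm2] is not known to be measurable. *)
Lemma ge0_le_integralT d (T : measurableType d) (R : realType)
    (mu : {measure set T -> \bar R}) (f g : T -> \bar R) :
  (forall x, (0 <= f x)%E) -> (forall x, (f x <= g x)%E) ->
  (\int[mu]_x f x <= \int[mu]_x g x)%E.
Proof.
move=> f0 fg; have g0 x : (0 <= g x)%E := le_trans (f0 x) (fg x).
rewrite !ge0_integralTE //=; apply: ereal_sup_le => _ [h hf <-].
by exists h => // x; exact: le_trans (hf x) (fg x).
Qed.

Section Cells.
Variable R : realType.
Implicit Types (tau : R) (k : int).
Local Notation mu := (@lebesgue_measure R).

Lemma intrS_mulr k tau : (k + 1)%:~R * tau = k%:~R * tau + tau.
Proof. by rewrite intrD mulrDl mul1r. Qed.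

Definition cell tau k : set R := `[k%:~R * tau, k%:~R * tau + tau[.

Lemma in_cell_floor tau x : 0 < tau -> cell tau (Num.floor (x / tau)) x.
Proof.
move=> t0; have /andP[lex ltx] := floor_itv (x / tau).
by rewrite /cell -intrS_mulr /= in_itv /= -ler_pdivlMr // -ltr_pdivrMr // lex.
Qed.

Lemma floor_div_cell tau k x : 0 < tau -> x \in cell tau k -> Num.floor (x / tau) = k.
Proof.
move=> t0; rewrite inE /cell -intrS_mulr /= in_itv /= => /andP[lex ltx].
by apply: floor_def; rewrite ler_pdivlMr // ltr_pdivrMr // lex.
Qed.

(* The cells, indexed by [nat] through the countability of [int], so as to use
   sigma-additivity of the integral. *)
Definition cell_enum tau (n : nat) : set R :=
  if @pickle_inv int n is Some k then cell tau k else set0.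

Lemma measurable_cell_enum tau n : measurable (cell_enum tau n).
Proof. by rewrite /cell_enum /cell; case: pickle_inv. Qed.

Lemma bigcup_cell_enum tau : 0 < tau -> \bigcup_n cell_enum tau n = setT.
Proof.
move=> t0; apply/seteqP; split => // x _.
exists (pickle (Num.floor (x / tau))); first by [].
by rewrite /cell_enum pickleK_inv; exact: in_cell_floor.
Qed.

Lemma trivIset_cell_enum tau : 0 < tau -> trivIset setT (cell_enum tau).
Proof.
move=> t0 n m _ _ [x []]; rewrite /cell_enum.
have := @pickle_invK int n; have := @pickle_invK int m.
case: (pickle_inv n) => [k|//]; case: (pickle_inv m) => [l|//] /= <- <- xk xl.
by rewrite -(floor_div_cell t0 (mem_set xk)) -(floor_div_cell t0 (mem_set xl)).
Qed.

Lemma measurable_fun_cellwise tau (f : R -> \bar R) : 0 < tau ->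
  (forall k, measurable_fun (cell tau k) f) -> measurable_fun setT f.
Proof.
move=> t0 mf; rewrite -(bigcup_cell_enum t0).
apply/measurable_fun_bigcup => [|n]; first exact: measurable_cell_enum.
by rewrite /cell_enum; case: pickle_inv => [k|]; [exact: mf | exact: measurable_fun_set0].
Qed.

Lemma ge0_le_integral_cellwise tau c (f g : R -> \bar R) : 0 < tau -> 0 <= c ->
  (forall x, (0 <= f x)%E) -> (forall x, (0 <= g x)%E) ->
  measurable_fun setT f -> measurable_fun setT g ->
  (forall k, (\int[mu]_(x in cell tau k) f x <=
              c%:E * \int[mu]_(x in cell tau k) g x)%E) ->
  (\int[mu]_x f x <= c%:E * \int[mu]_x g x)%E.
Proof.
move=> t0 c0 f0 g0 mf mg le_fg.
have integral_cells (h : R -> \bar R) : (forall x, (0 <= h x)%E) -> measurable_fun setT h ->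
    (\int[mu]_x h x = \sum_(n <oo) \int[mu]_(x in cell_enum tau n) h x)%E.
  move=> h0 mh; rewrite -(bigcup_cell_enum t0) ge0_integral_bigcup //.
  - exact: measurable_cell_enum.
  - by rewrite bigcup_cell_enum.
  - exact: trivIset_cell_enum.
rewrite (integral_cells f) // (integral_cells g) //.
rewrite -nneseriesZl; last by move=> n _; exact: integral_ge0.
apply: lee_nneseries => [n _ _|n _]; first exact: integral_ge0.
rewrite /cell_enum; case: pickle_inv => [k|]; first exact: le_fg.
by rewrite !integral_set0 mule0.
Qed.

Definition cell_slope tau (u : R -> R) (x : R) : R :=
  let a := (Num.floor (x / tau))%:~R * tau in (u (a + tau) - u a) / tau.

Lemma cell_slopeE tau (u : R -> R) k x : 0 < tau -> x \in cell tau k ->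
  cell_slope tau u x = (u (k%:~R * tau + tau) - u (k%:~R * tau)) / tau.
Proof. by move=> t0 /(floor_div_cell t0); rewrite /cell_slope => ->. Qed.

Lemma measurable_cell_slope_sq tau (u : R -> R) : 0 < tau ->
  measurable_fun setT (fun x => (cell_slope tau u x ^+ 2)%:E).
Proof.
move=> t0; apply: (measurable_fun_cellwise t0) => k.
apply: (eq_measurable_fun
  (cst (((u (k%:~R * tau + tau) - u (k%:~R * tau)) / tau) ^+ 2)%:E)) => //.
by move=> x xk; rewrite /= (cell_slopeE u t0 xk).
Qed.

End Cells.

Section Calculus.
Variable R : realType.
Local Notation mu := (@lebesgue_measure R).

Lemma is_derive_mulr (c x : R) : is_derive x 1 (fun t => c * t) c.
Proof.
have -> : (fun t : R => c * t) = c *: id by apply/funext.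
exact: is_derive_eq (is_deriveZ c (is_derive_id x 1)) (mulr1 c).
Qed.

Lemma is_derive_affine (p1 p2 x : R) : is_derive x 1 (fun t => p1 + p2 * t) p2.
Proof.
have -> : (fun t : R => p1 + p2 * t) = cst p1 + (fun t => p2 * t) by apply/funext.
exact: is_derive_eq (is_deriveD (is_derive_cst p1 x 1) (is_derive_mulr p2 x)) (add0r p2).
Qed.

Lemma is_derive_expaffine (q1 q2 c x : R) :
  is_derive x 1 (fun t => q1 + q2 * expR (c * t)) (q2 * (c * expR (c * x))).
Proof.
have dexp : is_derive x 1 (fun t => expR (c * t)) (c * expR (c * x)).
  by rewrite mulrC; exact: is_derive1_comp (is_derive_expR _) (is_derive_mulr c x).
have -> : (fun t : R => q1 + q2 * expR (c * t)) =
    cst q1 + q2 *: (fun t => expR (c * t)) by apply/funext.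
exact: is_derive_eq (is_deriveD (is_derive_cst q1 x 1) (is_deriveZ q2 dexp)) (add0r _).
Qed.

Lemma continuous_expaffine (q1 q2 c : R) : continuous (fun t => q1 + q2 * expR (c * t)).
Proof.
move=> x; apply/differentiable_continuous/derivable1_diffP.
by case: (is_derive_expaffine q1 q2 c x).
Qed.

Lemma derive1_eq_itv (f g : R -> R) (a b x : R) :
  (forall t, a <= t <= b -> f t = g t) -> a < x < b -> f^`() x = g^`() x.
Proof.
move=> fg xab; rewrite !derive1E; apply: near_eq_derive.
have xi : x \in `]a, b[%R by rewrite in_itv /= xab.
apply: filterS (near_in_itvoo xi) => t.
by rewrite in_itv /= => /andP[/ltW ? /ltW ?]; apply: fg; apply/andP.
Qed.

Lemma derive1_affine_itv (a b p1 p2 : R) (u : R -> R) :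
  (forall t, a <= t <= b -> u t = p1 + p2 * t) -> forall x, a < x < b -> u^`() x = p2.
Proof.
move=> hu x xab; have df := is_derive_affine p1 p2 x.
by rewrite (derive1_eq_itv hu xab) derive1E derive_val.
Qed.

Lemma derive1_expaffine_itv (a b c q1 q2 : R) (v : R -> R) :
  (forall t, a <= t <= b -> v t = q1 + q2 * expR (c * t)) ->
  forall x, a < x < b -> v^`() x = q2 * c * expR (c * x).
Proof.
move=> hv x xab; have df := is_derive_expaffine q1 q2 c x.
by rewrite (derive1_eq_itv hv xab) derive1E derive_val mulrA.
Qed.

Lemma measurable_derive1_sq_itv (f g : R -> R) (a b : R) :
  continuous g -> (forall x, a < x < b -> f^`() x = g x) ->
  measurable_fun `]a, b[ (fun x => (derive1 f x ^+ 2)%:E).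
Proof.
move=> cg fg; apply: (eq_measurable_fun (fun x => (g x ^+ 2)%:E)).
  by move=> x; rewrite inE /= in_itv /= => /fg ->.
apply/measurable_EFinP/measurable_funX.
exact: measurable_funS (continuous_measurable_fun cg).
Qed.

Lemma continuous_scaled_expR (K c : R) : continuous (fun t => K * expR (c * t)).
Proof.
by move=> x; have := @continuous_expaffine 0 K c x; under eq_fun do rewrite add0r.
Qed.

Lemma integral_cst_itv_co (r a b : R) : a < b ->
  (\int[mu]_(x in `[a, b[) r%:E = (r * (b - a))%:E)%E.
Proof.
move=> ab; rewrite integral_cst //= lebesgue_measure_itv /= lte_fin ab.
by rewrite -EFinD -EFinM.
Qed.

Lemma integral_exp_itv_oo (K c a b : R) : c != 0 -> a < b ->
  (\int[mu]_(x in `]a, b[) (K * expR (c * x))%:E =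
   ((K / c) * (expR (c * b) - expR (c * a)))%:E)%E.
Proof.
move=> c0 ab; have cK := @continuous_scaled_expR K c.
rewrite -(@integral_itv_bndoo _ _ _ _ true false); last first.
  by apply/measurable_EFinP; apply: measurable_funS (continuous_measurable_fun cK).
pose F := fun t : R => 0 + (K / c) * expR (c * t).
rewrite (@continuous_FTC2 _ _ F) //.
- by rewrite /F !add0r -EFinB mulrBr.
- exact: continuous_subspaceT.
- split.
  + by move=> x _; case: (is_derive_expaffine 0 (K / c) c x).
  + exact/cvg_at_right_filter/continuous_expaffine.
  + exact/cvg_at_left_filter/continuous_expaffine.
- move=> x _; have dF := is_derive_expaffine 0 (K / c) c x.
  by rewrite derive1E derive_val mulrA divfK.
Qed.

Lemma measurable_derive1_sq_cellwise (tau : R) (f : R -> R) : 0 < tau ->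
  (forall k : int, exists2 g : R -> R, continuous g &
     forall x, k%:~R * tau < x < k%:~R * tau + tau -> derive1 f x = g x) ->
  measurable_fun setT (fun x => (derive1 f x ^+ 2)%:E).
Proof.
move=> t0 hf; apply: (measurable_fun_cellwise t0) => k; have [g cg fg] := hf k.
rewrite /cell; apply/emeasurable_fun_itv_obnd_cbndP; exact: measurable_derive1_sq_itv cg fg.
Qed.

End Calculus.

Section CellEstimates.
Variable R : realType.
Local Notation mu := (@lebesgue_measure R).

(* Here [E] and [E * Q] are the values of [expR (c t)] at the two ends of a
   cell; the gap between the two sides factors as
   [(q E)^2 / tau * (1 - Q) * (1 - Q (1 - c tau))]. *)
Lemma expaffine_slope_ineq (q c tau E Q : R) : c < 0 -> 0 < tau ->
  0 < Q -> Q < 1 -> Q * (1 - c * tau) <= 1 ->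
  (q * c) ^+ 2 / (c + c) * ((E * Q) ^+ 2 - E ^+ 2) <=
  (1 - c * tau / 2) * ((q * (E * Q - E) / tau) ^+ 2 * tau).
Proof.
move=> c0 t0 Q0 Q1 hQ; rewrite -subr_ge0.
have -> : (1 - c * tau / 2) * ((q * (E * Q - E) / tau) ^+ 2 * tau) -
    (q * c) ^+ 2 / (c + c) * ((E * Q) ^+ 2 - E ^+ 2) =
    (q * E) ^+ 2 / tau * (1 - Q) * (1 - Q * (1 - c * tau)).
  by field; rewrite gt_eqF // lt_eqF //; lra.
by apply: mulr_ge0; [apply: mulr_ge0; [apply: divr_ge0; [exact: sqr_ge0 | lra] | lra] | lra].
Qed.

Lemma affine_itv_slope (a tau p1 p2 : R) (u : R -> R) : 0 < tau ->
  (forall t, a <= t <= a + tau -> u t = p1 + p2 * t) -> (u (a + tau) - u a) / tau = p2.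
Proof.
move=> t0 hu; have ab : a < a + tau by rewrite ltrDl.
by rewrite !hu ?lexx ?(ltW ab) //; field; rewrite gt_eqF.
Qed.

Lemma energy_expaffine_cell_le (c a tau q1 q2 : R) (v : R -> R) : c < 0 -> 0 < tau ->
  (forall t, a <= t <= a + tau -> v t = q1 + q2 * expR (c * t)) ->
  (\int[mu]_(x in `[a, (a + tau)%R[) (derive1 v x ^+ 2)%:E <=
   (1 - c * tau / 2)%:E *
   \int[mu]_(x in `[a, (a + tau)%R[) (((v (a + tau) - v a) / tau) ^+ 2)%:E)%E.
Proof.
move=> c0 t0 hv; have ab : a < a + tau by rewrite ltrDl.
have dv := derive1_expaffine_itv hv.
have sq_expR y : expR (c * y) ^+ 2 = expR ((c + c) * y) by rewrite mulrDl expRD expr2.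
rewrite integral_cst_itv_co // addrAC subrr add0r.
rewrite (@integral_itv_bndoo _ _ _ _ true true); last first.
  exact: measurable_derive1_sq_itv (@continuous_scaled_expR _ (q2 * c) c) dv.
under eq_integral => x.
  rewrite inE /= in_itv /= => xab; rewrite (dv _ xab) exprMn sq_expR.
  over.
rewrite integral_exp_itv_oo //; last by rewrite lt_eqF // -(addr0 0) ltrD.
rewrite -EFinM lee_fin !hv ?lexx ?(ltW ab) // -!sq_expR (mulrDr c a tau) expRD.
have -> : q1 + q2 * (expR (c * a) * expR (c * tau)) - (q1 + q2 * expR (c * a)) =
  q2 * (expR (c * a) * expR (c * tau) - expR (c * a)) by ring.
apply: expaffine_slope_ineq => //.
- exact: expR_gt0.
- by rewrite expR_lt1 pmulr_llt0.
- have e : expR (c * tau) * expR (- (c * tau)) = 1 by rewrite -expRD subrr expR0.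
  by rewrite -[X in _ <= X]e ler_pM2l ?expR_gt0 // expR_ge1Dx.
Qed.

Lemma energy_affine_cell (a tau p1 p2 : R) (u : R -> R) : 0 < tau ->
  (forall t, a <= t <= a + tau -> u t = p1 + p2 * t) ->
  (\int[mu]_(x in `[a, (a + tau)%R[) (((u (a + tau) - u a) / tau) ^+ 2)%:E =
   \int[mu]_(x in `[a, (a + tau)%R[) (derive1 u x ^+ 2)%:E)%E.
Proof.
move=> t0 hu; have du := derive1_affine_itv hu.
rewrite (affine_itv_slope t0 hu).
rewrite (@integral_itv_bndoo _ _ _ _ true true); last exact: measurable_cst.
rewrite (@integral_itv_bndoo _ _ _ _ true true); last first.
  exact: measurable_derive1_sq_itv (@cst_continuous _ _ p2) du.
by apply: eq_integral => x; rewrite inE /= in_itv /= => xab; rewrite du.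
Qed.

(* Keep only the [y] of the cell, where the difference quotient of [u] at [x]
   is the slope. *)
Lemma slope_sq_le_H12_section (a tau p1 p2 x : R) (u : R -> R) : 0 < tau ->
  (forall t, a <= t <= a + tau -> u t = p1 + p2 * t) -> a <= x <= a + tau ->
  ((tau * ((u (a + tau) - u a) / tau) ^+ 2)%:E <=
   \int[mu]_y (((u x - u y) ^+ 2) / ((x - y) ^+ 2))%:E)%E.
Proof.
move=> t0 hu xab; have ab : a < a + tau by rewrite ltrDl.
rewrite (affine_itv_slope t0 hu).
set D := `]a, (a + tau)%R[ `\ x.
have mD : measurable D by apply: measurableD.
apply: (@le_trans _ _ (\int[mu]_y (((fun=> (p2 ^+ 2)%:E) \_ D) y))%E); last first.
  apply: ge0_le_integralT => y; rewrite /patch; case: ifP => [|_].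
  - by rewrite lee_fin sqr_ge0.
  - by [].
  - rewrite inE /D /= in_itv /= => -[/andP[ay yb] yx].
    rewrite lee_fin !hu ?(ltW ay) ?(ltW yb) //.
    have xy : x - y != 0 by rewrite subr_eq0; apply/eqP => e; apply: yx.
    rewrite (_ : p1 + p2 * x - (p1 + p2 * y) = p2 * (x - y)); last by ring.
    by rewrite exprMn mulfK // sqrf_eq0.
  - by rewrite lee_fin divr_ge0 // sqr_ge0.
rewrite -integral_mkcond integral_setD1; [|exact: mD|exact: measurable_cst].
rewrite -(@integral_itv_bndoo _ _ _ _ true true); last exact: measurable_cst.
by rewrite integral_cst_itv_co // addrAC subrr add0r mulrC.
Qed.

End CellEstimates.

Section Energies.
Variables (R : realType) (tau : R) (u : R -> R).
Hypothesis tau_gt0 : 0 < tau.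

Lemma sq_int_ge0 (f : R -> R) : (0 <= sq_int f)%E.
Proof. by apply: integral_ge0 => x _; rewrite lee_fin sqr_ge0. Qed.

Lemma piecewise_affine_cell : piecewise_affine tau u ->
  forall k : int, exists p1 p2 : R, forall t,
    k%:~R * tau <= t <= k%:~R * tau + tau -> u t = p1 + p2 * t.
Proof.
by move=> pa k; have [p1 [p2 hp]] := pa k; exists p1, p2 => t; rewrite -intrS_mulr => /hp.
Qed.

Lemma upwinded_interpolant_cell (alpha beta : R) (v : R -> R) :
  upwinded_interpolant alpha beta tau u v ->
  forall k : int, exists q1 q2 : R, forall t,
    k%:~R * tau <= t <= k%:~R * tau + tau -> v t = q1 + q2 * expR (- (beta / alpha) * t).
Proof.
move=> [_ [_ hv]] k; have [q1 [q2 hq]] := hv k; exists q1, q2 => t.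
by rewrite -intrS_mulr => /hq ->; rewrite mulNr mulrAC.
Qed.

Lemma dirichlet_upwind_le (alpha beta : R) (v : R -> R) : 0 < alpha -> 0 < beta ->
  upwinded_interpolant alpha beta tau u v ->
  (dirichlet v <= (1 + beta * tau / (2 * alpha))%:E * sq_int (cell_slope tau u))%E.
Proof.
move=> a0 b0 uv; have hv := upwinded_interpolant_cell uv; have [_ [vu _]] := uv.
set c := - (beta / alpha); have c0 : c < 0 by rewrite oppr_lt0 divr_gt0.
have -> : 1 + beta * tau / (2 * alpha) = 1 - c * tau / 2.
  by rewrite /c; field; rewrite gt_eqF.
apply: (ge0_le_integral_cellwise tau_gt0).
- have ctau : c * tau < 0 by rewrite pmulr_llt0.
  lra.
- by move=> x; rewrite lee_fin sqr_ge0.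
- by move=> x; rewrite lee_fin sqr_ge0.
- have mv : measurable_fun setT (fun x => (derive1 v x ^+ 2)%:E).
    apply: (measurable_derive1_sq_cellwise tau_gt0) => k; have [q1 [q2 hq]] := hv k.
    exists (fun x => q2 * c * expR (c * x)); first exact: continuous_scaled_expR.
    exact: derive1_expaffine_itv hq.
  exact mv.
- exact: measurable_cell_slope_sq.
- move=> k; have [q1 [q2 hq]] := hv k.
  have vu_end : v (k%:~R * tau + tau) = u (k%:~R * tau + tau) by rewrite -intrS_mulr vu.
  under [X in (_ <= _ * X)%E]eq_integral => x xk.
    rewrite (cell_slopeE u tau_gt0 xk) -vu_end -vu.
    over.
  exact: energy_expaffine_cell_le c0 tau_gt0 hq.
Qed.

Lemma sq_int_cell_slope_le : piecewise_affine tau u ->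
  (sq_int (cell_slope tau u) <= dirichlet u)%E.
Proof.
move=> /piecewise_affine_cell pa.
rewrite -[X in (_ <= X)%E]mul1e; apply: (ge0_le_integral_cellwise tau_gt0) => //.
- by move=> x; rewrite lee_fin sqr_ge0.
- by move=> x; rewrite lee_fin sqr_ge0.
- exact: measurable_cell_slope_sq.
- have mdu : measurable_fun setT (fun x => (derive1 u x ^+ 2)%:E).
    apply: (measurable_derive1_sq_cellwise tau_gt0) => k; have [p1 [p2 hp]] := pa k.
    by exists (cst p2); [exact: cst_continuous | exact: derive1_affine_itv hp].
  exact mdu.
- move=> k; have [p1 [p2 hp]] := pa k; rewrite mul1e.
  under eq_integral => x xk do rewrite (cell_slopeE u tau_gt0 xk).
  by rewrite (energy_affine_cell tau_gt0 hp).
Qed.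

Lemma sq_int_cell_slope_le_H12 : piecewise_affine tau u ->
  (tau%:E * sq_int (cell_slope tau u) <= H12_seminorm2 u)%E.
Proof.
move=> /piecewise_affine_cell pa.
have mw := measurable_cell_slope_sq u tau_gt0.
have w0 x : (0 <= (cell_slope tau u x ^+ 2)%:E)%E by rewrite lee_fin sqr_ge0.
rewrite /sq_int -ge0_integralZl_EFin //; last exact: ltW.
apply: ge0_le_integralT => x; first by rewrite -EFinM lee_fin mulr_ge0 ?sqr_ge0 ?ltW.
have [p1 [p2 hp]] := pa (Num.floor (x / tau)).
have := in_cell_floor x tau_gt0; rewrite /cell /= in_itv /= => /andP[xa xb].
rewrite -EFinM /cell_slope; apply: slope_sq_le_H12_section tau_gt0 hp _.
by rewrite xa ltW.
Qed.

End Energies.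

Lemma energy_bounds_combine_real {R : realType} (alpha beta tau dv w du h : R) :
  0 < alpha -> 0 < beta -> 0 < tau ->
  dv <= (1 + beta * tau / (2 * alpha)) * w -> w <= du -> tau * w <= h -> 0 <= w ->
  alpha * dv <= (1 + beta / 2) * (h + alpha * du).
Proof.
move=> a0 b0 t0 hdv hw hh w0.
have e1 : alpha * dv <= alpha * w + beta / 2 * (tau * w).
  have -> : alpha * w + beta / 2 * (tau * w) =
      alpha * ((1 + beta * tau / (2 * alpha)) * w) by field; rewrite gt_eqF.
  by rewrite ler_pM2l.
have e2 : alpha * w <= alpha * du by rewrite ler_pM2l.
have e3 : beta / 2 * (tau * w) <= beta / 2 * h by rewrite ler_pM2l // divr_gt0.
have du0 : 0 <= du := le_trans w0 hw.
have e4 : 0 <= beta / 2 * (alpha * du) by rewrite !mulr_ge0 // ltW // divr_gt0.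
have e5 : 0 <= alpha * du by rewrite mulr_ge0 // ltW.
have h0 : 0 <= h by apply: le_trans hh; rewrite mulr_ge0 // ltW.
rewrite mulrDl mul1r; lra.
Qed.

Lemma energy_bounds_combine {R : realType} (alpha beta tau : R) (Dv W Du H : \bar R) :
  0 < alpha -> 0 < beta -> 0 < tau -> (Du < +oo)%E ->
  (Dv <= (1 + beta * tau / (2 * alpha))%:E * W)%E -> (W <= Du)%E ->
  (tau%:E * W <= H)%E -> (0 <= Dv)%E -> (0 <= W)%E ->
  (alpha%:E * Dv <= (1 + beta / 2)%:E * (H + alpha%:E * Du))%E.
Proof.
move=> a0 b0 t0 Du_fin hDv hW hH Dv0 W0.
have Wfin : W \is a fin_num by rewrite ge0_fin_numE // (le_lt_trans hW Du_fin).
have Dufin : Du \is a fin_num by rewrite ge0_fin_numE // (le_trans W0 hW).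
have Dvfin : Dv \is a fin_num.
  by rewrite ge0_fin_numE // (le_lt_trans hDv) // -(fineK Wfin) -EFinM ltry.
move: hDv hW hH W0; rewrite -(fineK Wfin) -(fineK Dufin) -(fineK Dvfin) -EFinM lee_fin.
move: (fine Dv) (fine W) (fine Du) => dv w du hdv hw hH W0.
have w0 : 0 <= w by rewrite -lee_fin.
rewrite lee_fin in hw; case: H hH => [h| |] hH //.
  rewrite -EFinM lee_fin in hH.
  have := energy_bounds_combine_real a0 b0 t0 hdv hw hH w0.
  by rewrite -lee_fin !EFinM EFinD EFinM.
have du0 : 0 <= du := le_trans w0 hw.
rewrite -EFinM addye // gt0_muley ?leey // lte_fin; lra.
Qed.

Theorem proposition13 (R : realType) (beta : R) (hbeta : 0 < beta) :
  exists C : R, forall (alpha tau : R) (u v : R -> R),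
    0 < alpha -> 0 < tau ->
    in_H1 u -> continuous u -> piecewise_affine tau u ->
    upwinded_interpolant alpha beta tau u v ->
    (alpha%:E * dirichlet v <= C%:E * (H12_seminorm2 u + alpha%:E * dirichlet u))%E.
Proof.
exists (1 + beta / 2) => alpha tau u v a0 t0 [_ Du_fin] _ pa uv.
apply: (energy_bounds_combine a0 hbeta t0 Du_fin).
- exact (dirichlet_upwind_le t0 a0 hbeta uv).
- exact (sq_int_cell_slope_le t0 pa).
- exact (sq_int_cell_slope_le_H12 t0 pa).
- exact: sq_int_ge0.
- exact: sq_int_ge0.
Qed.
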